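(* Let $n\ge 3$, let $\mathbf{p}\in\mathbb{Q}^{n!}$ be any profile, and write $Q_{\mathbf{p}}=\sum_{\ell=1}^{n!}p_\ell R_\ell$ in column form as $Q_{\mathbf{p}}=[\mathbf{q}_1\ \cdots\ \mathbf{q}_n]$. Define $\mathbf{t}_k=\sum_{j=1}^{k}\mathbf{q}_j$ for $k=1,\dots,n-1$. Then a face $G$ of the braid arrangement is a possible outcome for a positional voting procedure with input $\mathbf{p}$ (i.e. there is a nonzero $\mathbf{w}\in\overline{W}$ with $Q_{\mathbf{p}}\mathbf{w}\in G$) if and only if $G$ intersects the convex hull of $\mathbf{t}_1,\dots,\mathbf{t}_{n-1}$.
   Context: Work over $\mathbb{Q}$. Label the permutations of $S_n$ as $\sigma_1,\dots,\sigma_{n!}$ (lexicographically in one-line notation), where $\sigma_\ell$ is the ranking in which candidate $\sigma_\ell(k)$ is placed $k$-th; $p_\ell$ is the number of voters with preference $\sigma_\ell$. $R_\ell$ is the $n\times n$ permutation matrix with $R_\ell(i,j)=1$ iff $\sigma_\ell(j)=i$, so $Q_{\mathbf{p}}(i,j)$ is the number of voters ranking candidate $i$ in position $j$. $\overline{W}=\{\mathbf{x}\in\mathbb{Q}^n : x_1\ge\cdots\ge x_n,\ x_1+\cdots+x_n=0\}$ is the set of weighting vectors; using $\mathbf{w}$, the results vector is $Q_{\mathbf{p}}\mathbf{w}$. The faces of the braid arrangement are the equivalence classes of $\mathbb{Q}^n$ under the relation: $\mathbf{x}\sim\mathbf{y}$ iff for all $i,j$, $x_i>x_j\iff y_i>y_j$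 and $x_i=x_j\iff y_i=y_j$ (equivalently, faces correspond to ordered set partitions of the candidates, i.e. rankings with ties). *)

From mathcomp Require Import all_boot all_order all_algebra all_fingroup.
Set Implicit Arguments. Unset Strict Implicit. Unset Printing Implicit Defensive.
Import Order.TTheory GRing.Theory Num.Theory.
Local Open Scope ring_scope.

(* A profile assigns to each ranking s : 'S_n (candidate s k is placed k-th)
   the (rational) number of voters with that preference. *)

Definition rank_mx n (s : 'S_n) : 'M[rat]_n :=
  \matrix_(i < n, j < n) ((s j == i)%:R : rat).

Definition Qp n (p : 'S_n -> rat) : 'M[rat]_n :=
  \sum_(s : 'S_n) p s *: rank_mx s.

Definition Wbar n (w : 'cV[rat]_n) : Prop :=
  (forall i j : 'I_n, (i <= j)%N -> w j 0 <= w i 0) /\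
  \sum_(i < n) w i 0 = 0.

Definition same_face n (x y : 'cV[rat]_n) : Prop :=
  forall i j : 'I_n,
    (x i 0 > x j 0 <-> y i 0 > y j 0) /\ (x i 0 = x j 0 <-> y i 0 = y j 0).

Definition is_face n (G : 'cV[rat]_n -> Prop) : Prop :=
  exists x : 'cV[rat]_n, forall y, G y <-> same_face x y.

(* t_k = q_1 + ... + q_k, k = 1..n-1; indexed by k : 'I_n.-1 (zero-based,
   so index k stands for t_{k+1} = sum of columns 0..k) *)
Definition tvec n (Q : 'M[rat]_n) (k : 'I_n.-1) : 'cV[rat]_n :=
  \sum_(j < n | (j <= k)%N) col j Q.

Definition in_conv_hull n m (v : 'I_m -> 'cV[rat]_n) (y : 'cV[rat]_n) : Prop :=
  exists lam : 'I_m -> rat,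
    (forall k, 0 <= lam k) /\ \sum_(k < m) lam k = 1 /\
    y = \sum_(k < m) lam k *: v k.

From mathcomp Require Import all_boot all_order all_algebra all_fingroup.
Import Order.TTheory GRing.Theory Num.Theory.
Set Implicit Arguments. Unset Strict Implicit. Unset Printing Implicit Defensive.
Local Open Scope ring_scope.

(* Abel summation: a weight vector w with w_1 >= ... >= w_n equals
   w_n (1,...,1) + sum_k d_k (1,...,1,0,...,0) (k ones) with gaps
   d_k = w_k - w_(k+1) >= 0, and Q_p maps the k-th step vector to t_k and
   (1,...,1) to N (1,...,1), N the number of voters.  Hence
   Q_p w = sum_k d_k t_k + w_n N (1,...,1).  A face is invariant under positive
   rescaling and under adding multiples of (1,...,1), and sum_k d_k = w_1 - w_n
   is positive when w is nonzero with sum 0; so normalising the gaps gives a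
   point of the convex hull of the t_k in the face of Q_p w.  Conversely convex
   weights, used as gaps and shifted to make the entries sum to 0, give a
   nonzero weight vector. *)

Section Faces.
Variable n : nat.
Implicit Types x y z : 'cV[rat]_n.

Lemma same_face_sym x y : same_face x y -> same_face y x.
Proof. by move=> xy i j; have [[? ?] [? ?]] := xy i j. Qed.

Lemma same_face_trans x y z : same_face x y -> same_face y z -> same_face x z.
Proof.
move=> xy yz i j; have [[? ?] [? ?]] := xy i j; have [[? ?] [? ?]] := yz i j.
by split; split; auto.
Qed.

Lemma same_face_scale_shift x a c : 0 < a -> same_face x (a *: x + const_mx c).
Proof.
move=> a_gt0 i j; rewrite !mxE ltrD2r ltr_pM2l //; split => //.
by split => [-> // | /addIr/mulfI]; apply; rewrite gt_eqF.
Qed.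

Lemma face_scale_shift G y a c :
  is_face G -> 0 < a -> G (a *: y + const_mx c) <-> G y.
Proof.
case=> x Gx a_gt0; have ya := same_face_scale_shift y c a_gt0.
split => /Gx xy; apply/Gx; first exact: same_face_trans xy (same_face_sym ya).
exact: same_face_trans xy ya.
Qed.

End Faces.

Lemma rank_mx_row_sum n (s : 'S_n) i : \sum_j rank_mx s i j = 1.
Proof.
rewrite (bigD1 (s^-1 i)%g) //= !mxE permKV eqxx big1 ?addr0 // => j ji.
by rewrite mxE -(inj_eq (@perm_inj _ s^-1%g)) permK (negbTE ji).
Qed.

Lemma mulmx_Qp_const n (p : 'S_n -> rat) c :
  Qp p *m (const_mx c : 'cV_n) = const_mx (c * \sum_s p s).
Proof.
apply/matrixP => i k; rewrite !mxE.
under eq_bigr => j _ do rewrite mxE /Qp summxE mulr_suml.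
rewrite exchange_big mulr_sumr; apply: eq_bigr => s _.
under eq_bigr => j _ do rewrite mxE.
by rewrite -mulr_suml -mulr_sumr rank_mx_row_sum mulr1 mulrC.
Qed.

Section TailSums.
Variables (R : pzRingType) (m : nat).

Definition tail_col (d : 'I_m -> R) (c : R) : 'cV[R]_m.+1 :=
  \col_(j < m.+1) (c + \sum_(k < m | (j <= k)%N) d k).

Definition step_col (k : 'I_m) : 'cV[R]_m.+1 := \col_(j < m.+1) ((j <= k)%N)%:R.

Definition gap (w : 'cV[R]_m.+1) (k : 'I_m) : R := w (inord k) 0 - w (inord k.+1) 0.

Lemma tail_col_first_sub_last d c :
  tail_col d c 0 0 - tail_col d c ord_max 0 = \sum_k d k.
Proof.
rewrite !mxE [X in _ - (_ + X)]big_pred0 => [|k]; last by rewrite /= leqNgt ltn_ord.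
by rewrite addr0 addrC addKr.
Qed.

Lemma telescope_tail_sumr (f : nat -> R) j : (j <= m)%N ->
  \sum_(k < m | (j <= k)%N) (f k - f k.+1) = f j - f m.
Proof.
move=> jm; rewrite -(big_geq_mkord j m xpredT (fun k => f k - f k.+1)).
rewrite -opprB -(telescope_sumr _ jm) -sumrN.
by apply: eq_bigr => k _; rewrite opprB.
Qed.

Lemma tail_col_gap w : w = tail_col (gap w) (w ord_max 0).
Proof.
apply/matrixP => j i; have j_le_m : (j <= m)%N by rewrite -ltnS.
rewrite ord1 mxE (telescope_tail_sumr (fun k => w (inord k) 0) j_le_m).
have -> : inord m = ord_max :> 'I_m.+1 by apply: ord_inj; rewrite inordK.
by rewrite inord_val addrC subrK.
Qed.

Lemma tail_colE d c : tail_col d c = \sum_k d k *: step_col k + const_mx c.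
Proof.
apply/matrixP => j z; rewrite !mxE summxE addrC; congr (_ + _).
rewrite big_mkcond; apply: eq_bigr => k _; rewrite !mxE.
by case: ifP; rewrite ?mulr1 ?mulr0.
Qed.

End TailSums.

Arguments step_col {R m}.

Lemma gap_ge0 m (w : 'cV[rat]_m.+1) k : Wbar w -> 0 <= gap w k.
Proof.
case=> w_mono _; have k_lt_m := ltn_ord k.
by rewrite subr_ge0 w_mono // !inordK // ltnW.
Qed.

Lemma Wbar_last_lt_first m (w : 'cV[rat]_m.+1) :
  w != 0 -> Wbar w -> w ord_max 0 < w 0 0.
Proof.
move=> w_neq0 [w_mono w_sum0]; rewrite lt_def w_mono // andbT.
apply: contra w_neq0 => /eqP w_const.
have wE j : w j 0 = w 0 0 by apply/le_anti; rewrite w_mono // w_const w_mono // -ltnS.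
move: w_sum0; under eq_bigr => j _ do rewrite wE.
rewrite sumr_const card_ord -mulr_natl => /eqP; rewrite mulf_eq0 pnatr_eq0 /= => /eqP w00.
by apply/eqP/matrixP => j i; rewrite ord1 wE w00 mxE.
Qed.

Lemma sum_gap_gt0 m (w : 'cV[rat]_m.+1) :
  w != 0 -> Wbar w -> 0 < \sum_k gap w k.
Proof.
move=> w_neq0 Ww; rewrite -(tail_col_first_sub_last _ (w ord_max 0)) -tail_col_gap.
by rewrite subr_gt0 Wbar_last_lt_first.
Qed.

Lemma tail_col_Wbar m (d : 'I_m -> rat) :
  (forall k, 0 <= d k) -> exists c, Wbar (tail_col d c).
Proof.
move=> d_ge0; pose S := \sum_j tail_col d 0 j 0; pose c := - S / m.+1%:R.
exists c; split.
  move=> i j ij; rewrite !mxE lerD2l [leRHS]big_mkcond [leLHS]big_mkcond.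
  apply: ler_sum => k _; case: ifP => [jk | _]; first by rewrite (leq_trans ij jk).
  by case: ifP.
have shift j : tail_col d c j 0 = c + tail_col d 0 j 0 by rewrite !mxE add0r.
rewrite (eq_bigr _ (fun j _ => shift j)) big_split /= sumr_const card_ord -/S.
by rewrite -mulr_natr /c divfK ?addNr ?pnatr_eq0.
Qed.

Lemma mulmx_step_col m (Q : 'M[rat]_m.+1) k : Q *m step_col k = tvec Q k.
Proof.
apply/matrixP => i z; rewrite !mxE summxE [RHS]big_mkcond; apply: eq_bigr => j _.
by rewrite !mxE; case: ifP; rewrite ?mulr1 ?mulr0.
Qed.

Lemma mulmx_tail_col m (Q : 'M[rat]_m.+1) d c :
  Q *m tail_col d c = \sum_k d k *: tvec Q k + Q *m const_mx c.
Proof.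
rewrite tail_colE mulmxDr mulmx_sumr.
by under eq_bigr => k _ do rewrite -scalemxAr mulmx_step_col.
Qed.

Lemma in_conv_hull_normalize n m (v : 'I_m -> 'cV[rat]_n) (d : 'I_m -> rat) :
  (forall k, 0 <= d k) -> 0 < \sum_k d k ->
  in_conv_hull v ((\sum_k d k)^-1 *: \sum_k d k *: v k).
Proof.
move=> d_ge0 D_gt0; exists (fun k => (\sum_k d k)^-1 * d k); split.
  by move=> k; rewrite mulr_ge0 ?invr_ge0 ?d_ge0 ?ltW.
split; first by rewrite -mulr_sumr mulVf ?gt_eqF.
by rewrite scaler_sumr; apply: eq_bigr => k _; rewrite scalerA.
Qed.

Theorem theorem4p2 (n : nat) (hn : (3 <= n)%N) (p : 'S_n -> rat)
    (G : 'cV[rat]_n -> Prop) (hG : is_face G) :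
  (exists w : 'cV[rat]_n, w != 0 /\ Wbar w /\ G (Qp p *m w)) <->
  (exists y : 'cV[rat]_n, G y /\ in_conv_hull (tvec (Qp p)) y).
Proof.
case: n hn p G hG => // m _ p G hG; split.
  case=> w [w_neq0 [Ww Gw]]; set D := \sum_k gap w k.
  have D_gt0 : 0 < D := sum_gap_gt0 w_neq0 Ww.
  exists (D^-1 *: \sum_k gap w k *: tvec (Qp p) k).
  split; last exact: in_conv_hull_normalize (fun k => gap_ge0 k Ww) D_gt0.
  apply/(face_scale_shift _ (w ord_max 0 * \sum_s p s) hG D_gt0).
  rewrite scalerA divff ?gt_eqF // scale1r -mulmx_Qp_const -mulmx_tail_col.
  by rewrite -tail_col_gap.
case=> y [+ [lam [lam_ge0 [lam_sum1 y_eq]]]]; rewrite y_eq => Gy.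
have [c Wc] := tail_col_Wbar lam_ge0.
exists (tail_col lam c); split; last split => //.
  apply: contra_neq (@oner_neq0 rat) => w0.
  by rewrite -lam_sum1 -(tail_col_first_sub_last _ c) w0 !mxE subrr.
rewrite mulmx_tail_col mulmx_Qp_const -[X in G (X + _)]scale1r.
exact/(face_scale_shift _ _ hG ltr01).
Qed.
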